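(* Let $(X,d_X)$ and $(Y,d_Y)$ be separable metric spaces such that $d_X$ is an ultrametric. For every $f: X\to Y$ the following are equivalent: (i) $f$ is of Baire class $1$; (ii) $f$ is the pointwise limit of a sequence of $\omega$-full functions; (iii) $f$ is the pointwise limit of a sequence of Lipschitz functions; (iv) $f$ is the pointwise limit of a sequence of uniformly continuous functions.
   Context: Work in ZF plus countable choice over the reals. A function $f:X\to Y$ is of Baire class $1$ if $f^{-1}(U)\in\mathbf{\Sigma}^0_2(X)$ for every open $U\subseteq Y$. A set $A\subseteq X$ is full with constant $r>0$ if $B(x,r)=\{y\in X:d_X(x,y)<r\}\subseteq A$ for every $x\in A$. A function $f:X\to Y$ is $\omega$-full if it has at most countably many values and there is a fixed $r>0$ such that the preimage of each value is a full set with constant $r$. A function $g:X\to Y$ is Lipschitz if there is $L>0$ with $d_Y(g(x),g(x'))\le L\, d_X(x,x')$ for all $x,x'\in X$. *)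

From Stdlib Require Import Reals.
Open Scope R_scope.

Definition is_metric {T : Type} (d : T -> T -> R) : Prop :=
  (forall x y, 0 <= d x y) /\
  (forall x y, d x y = 0 <-> x = y) /\
  (forall x y, d x y = d y x) /\
  (forall x y z, d x z <= d x y + d y z).

Definition is_ultrametric {T : Type} (d : T -> T -> R) : Prop :=
  forall x y z, d x z <= Rmax (d x y) (d y z).

Definition countable_set {T : Type} (A : T -> Prop) : Prop :=
  exists h : T -> nat, forall a b, A a -> A b -> h a = h b -> a = b.

Definition ball {T : Type} (d : T -> T -> R) (x : T) (r : R) : T -> Prop :=
  fun y => d x y < r.

Definition separable {T : Type} (d : T -> T -> R) : Prop :=
  exists D : T -> Prop, countable_set D /\
    forall x eps, 0 < eps -> exists z, D z /\ d x z < eps.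

Definition is_open {T : Type} (d : T -> T -> R) (U : T -> Prop) : Prop :=
  forall x, U x -> exists r, 0 < r /\ forall y, ball d x r y -> U y.

Definition is_closed {T : Type} (d : T -> T -> R) (F : T -> Prop) : Prop :=
  is_open d (fun x => ~ F x).

Definition Sigma02 {T : Type} (d : T -> T -> R) (A : T -> Prop) : Prop :=
  exists F : nat -> T -> Prop, (forall n, is_closed d (F n)) /\
    forall x, A x <-> exists n, F n x.

Definition baire_class1 {X Y : Type} (dX : X -> X -> R) (dY : Y -> Y -> R)
  (f : X -> Y) : Prop :=
  forall U : Y -> Prop, is_open dY U -> Sigma02 dX (fun x => U (f x)).

Definition full_set {X : Type} (dX : X -> X -> R) (A : X -> Prop) (r : R) : Prop :=
  forall x, A x -> forall y, ball dX x r y -> A y.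

Definition omega_full {X Y : Type} (dX : X -> X -> R) (f : X -> Y) : Prop :=
  countable_set (fun y => exists x, f x = y) /\
  exists r, 0 < r /\ forall y : Y, full_set dX (fun x => f x = y) r.

Definition lipschitz {X Y : Type} (dX : X -> X -> R) (dY : Y -> Y -> R)
  (g : X -> Y) : Prop :=
  exists L, 0 < L /\ forall x x', dY (g x) (g x') <= L * dX x x'.

Definition unif_continuous {X Y : Type} (dX : X -> X -> R) (dY : Y -> Y -> R)
  (g : X -> Y) : Prop :=
  forall eps, 0 < eps -> exists delta, 0 < delta /\
    forall x x', dX x x' < delta -> dY (g x) (g x') < eps.

Definition pointwise_limit {X Y : Type} (dY : Y -> Y -> R)
  (fs : nat -> X -> Y) (f : X -> Y) : Prop :=
  forall x eps, 0 < eps -> exists N, forall n, (N <= n)%nat -> dY (fs n x) (f x) < eps.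

(* (i) => (ii),(iii): fix a dense sequence (e_k) of Y. Since f is of Baire class 1, each
   preimage f^-1(B(e_k, 1/(i+1))) is a countable union of closed sets, so for every level i
   we get a countable cover of X by closed sets C_{i,p} on which f is 1/(i+1)-close to a
   point c_p. At stage n and level i, pick the least p such that B(x, 1/(n+1)) meets C_{i,p}.
   In an ultrametric space two points closer than 1/(n+1) have the same ball of that radius,
   so this choice is constant at scale 1/(n+1); and as n grows it stabilises to the least p
   with x in C_{i,p}, because those C_{i,q} with q < p avoid a neighbourhood of x. Reading
   off c_p at the deepest level <= n whose choice is consistent with all coarser levels, and
   truncating to the ball of radius n about c_0, gives omega-full Lipschitz approximants.
   Conversely, a pointwise limit of uniformly continuous f_n is of Baire class 1 since
   f^-1(U) = U_{k,N} n_{n>=N} {x | B(f_n x, 1/(k+1)) is contained in U}. *)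
From Stdlib Require Import Reals Lra Lia Wf_nat Classical ClassicalEpsilon.
From Stdlib Require Import FunctionalExtensionality PropExtensionality.
From Stdlib Require Cantor.
Open Scope R_scope.

Definition rad (k : nat) : R := / INR (S k).

Lemma rad_gt0 k : 0 < rad k.
Proof. apply Rinv_0_lt_compat, lt_0_INR; lia. Qed.

Lemma rad_le n m : (n <= m)%nat -> rad m <= rad n.
Proof. intro H. apply Rinv_le_contravar; [apply lt_0_INR; lia | apply le_INR; lia]. Qed.

Lemma rad_eventually_lt eps : 0 < eps -> exists N, forall n, (N <= n)%nat -> rad n < eps.
Proof.
  intro Heps. destruct (archimed_cor1 eps Heps) as [N [HN HN0]].
  exists (pred N). intros n Hn. apply Rle_lt_trans with (rad (pred N)); [now apply rad_le|].
  unfold rad. now replace (S (pred N)) with N by lia.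
Qed.

Lemma eventually_forall_le (P : nat -> nat -> Prop) :
  (forall l, exists N, forall n, (N <= n)%nat -> P l n) ->
  forall j, exists N, forall n, (N <= n)%nat -> forall l, (l <= j)%nat -> P l n.
Proof.
  intros HP j. induction j as [|j [N1 H1]].
  - destruct (HP 0%nat) as [N HN]. exists N. intros n Hn l Hl.
    replace l with 0%nat by lia. auto.
  - destruct (HP (S j)) as [N2 H2]. exists (max N1 N2). intros n Hn l Hl.
    destruct (Nat.eq_dec l (S j)) as [->|]; [apply H2 | apply H1]; lia.
Qed.

Definition is_least (P : nat -> Prop) (a : nat) : Prop :=
  P a /\ forall q, P q -> (a <= q)%nat.

Definition least (P : nat -> Prop) : nat := epsilon (inhabits 0%nat) (is_least P).

Lemma least_spec P : (exists p, P p) -> is_least P (least P).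
Proof.
  intro HP. unfold least. apply epsilon_spec.
  destruct (dec_inh_nat_subset_has_unique_least_element P (fun n => classic (P n)) HP)
    as [a [Ha _]].
  now exists a.
Qed.

Lemma is_least_unique P a b : is_least P a -> is_least P b -> a = b.
Proof. intros [Pa Ha] [Pb Hb]. apply Nat.le_antisymm; auto. Qed.

Section MetricSpace.
Variables (T : Type) (d : T -> T -> R) (hd : is_metric d).

Lemma dist_ge0 x y : 0 <= d x y.
Proof. apply hd. Qed.

Lemma dist_xx x : d x x = 0.
Proof. now apply hd. Qed.

Lemma dist_sym x y : d x y = d y x.
Proof. apply hd. Qed.

Lemma dist_triangle x y z : d x z <= d x y + d y z.
Proof. apply hd. Qed.

Lemma dist_triangle_sym x y z : d x z <= d y x + d y z.
Proof. rewrite (dist_sym y x). apply dist_triangle. Qed.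

Lemma ball_open y r : is_open d (ball d y r).
Proof.
  intros z Hz. exists (r - d y z). split; [unfold ball in Hz; lra|].
  intros w Hw. unfold ball in *. pose proof (dist_triangle y z w). lra.
Qed.

Lemma is_closed_forall (I : Type) (P : I -> Prop) (A : I -> T -> Prop) :
  (forall i, is_closed d (A i)) -> is_closed d (fun x => forall i, P i -> A i x).
Proof.
  intros HA x Hx. apply not_all_ex_not in Hx as [i Hi].
  apply imply_to_and in Hi as [HPi Hi].
  destruct (HA i x Hi) as [r [Hr Hball]].
  exists r. split; [exact Hr|]. intros y Hy HAy. exact (Hball y Hy (HAy i HPi)).
Qed.

Lemma closed_avoid_finite (A : nat -> T -> Prop) x p :
  (forall q, is_closed d (A q)) -> (forall q, (q < p)%nat -> ~ A q x) ->
  exists r, 0 < r /\ forall q, (q < p)%nat -> forall y, d x y < r -> ~ A q y.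
Proof.
  intros HA. induction p as [|p IH]; intro Hx.
  - exists 1. split; [lra|]. intros. lia.
  - destruct IH as [r1 [Hr1 H1]]; [intros q Hq; apply Hx; lia|].
    destruct (HA p x (Hx p (Nat.lt_succ_diag_r p))) as [r2 [Hr2 H2]].
    exists (Rmin r1 r2). split; [now apply Rmin_glb_lt|].
    intros q Hq y Hy. pose proof (Rmin_l r1 r2). pose proof (Rmin_r r1 r2).
    destruct (Nat.eq_dec q p) as [->|].
    + apply H2. unfold ball. lra.
    + apply H1; [lia | lra].
Qed.

Lemma ultrametric_ball_eq (uT : is_ultrametric d) x x' r :
  d x x' < r -> forall z, d x z < r <-> d x' z < r.
Proof.
  intros Hxx' z. split; intro Hz.
  - eapply Rle_lt_trans; [apply (uT x' x z)|].
    apply Rmax_lub_lt; [now rewrite dist_sym | exact Hz].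
  - eapply Rle_lt_trans; [apply (uT x x' z)|]. now apply Rmax_lub_lt.
Qed.

End MetricSpace.

Section Maps.
Variables (X Y : Type) (dX : X -> X -> R) (dY : Y -> Y -> R).
Variables (hX : is_metric dX) (hY : is_metric dY).

Lemma lipschitz_unif_continuous g : lipschitz dX dY g -> unif_continuous dX dY g.
Proof.
  intros [L [HL Hg]] eps Heps. exists (eps / L). split; [apply Rdiv_lt_0_compat; lra|].
  intros x x' Hx. eapply Rle_lt_trans; [apply Hg|].
  apply Rmult_lt_compat_l with (r := L) in Hx; [|lra].
  now replace (L * (eps / L)) with eps in Hx by (field; lra).
Qed.

Lemma omega_full_unif_continuous g : omega_full dX g -> unif_continuous dX dY g.
Proof.
  intros [_ [r [Hr Hg]]] eps Heps. exists r. split; [exact Hr|].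
  intros x x' Hx. rewrite (Hg (g x) x eq_refl x' Hx), dist_xx; assumption.
Qed.

Lemma omega_full_of_locally_constant (c : nat -> Y) g r :
  0 < r -> (forall x, exists q, g x = c q) ->
  (forall x x', dX x x' < r -> g x = g x') -> omega_full dX g.
Proof.
  intros Hr Hc Hg. split.
  - exists (fun y => epsilon (inhabits 0%nat) (fun q => c q = y)).
    intros a b [xa <-] [xb <-] E.
    assert (Hinv : forall x, c (epsilon (inhabits 0%nat) (fun q => c q = g x)) = g x).
    { intro x. apply epsilon_spec. destruct (Hc x) as [q Hq]. now exists q. }
    now rewrite <- (Hinv xa), <- (Hinv xb), E.
  - exists r. split; [exact Hr|]. intros y x <- x'. symmetry. now apply Hg.
Qed.

Lemma lipschitz_of_locally_constant (y0 : Y) g r M :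
  0 < r -> 0 <= M -> (forall x, dY y0 (g x) <= M) ->
  (forall x x', dX x x' < r -> g x = g x') -> lipschitz dX dY g.
Proof.
  intros Hr HM Hb Hg. exists ((2 * M + 1) / r).
  assert (HL : 0 < (2 * M + 1) / r) by (apply Rdiv_lt_0_compat; lra).
  split; [exact HL|]. intros x x'.
  destruct (Rlt_le_dec (dX x x') r) as [Hxx'|Hxx'].
  - rewrite (Hg x x' Hxx'), dist_xx by assumption.
    apply Rmult_le_pos; [lra | apply dist_ge0, hX].
  - pose proof (dist_triangle_sym _ dY hY (g x) y0 (g x')).
    pose proof (Hb x). pose proof (Hb x').
    apply Rle_trans with ((2 * M + 1) / r * r); [|now apply Rmult_le_compat_l; lra].
    replace ((2 * M + 1) / r * r) with (2 * M + 1) by (field; lra). lra.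
Qed.

Definition truncate (y0 : Y) (M : R) (y : Y) : Y := if Rle_dec (dY y0 y) M then y else y0.

Lemma truncate_bound y0 M y : 0 <= M -> dY y0 (truncate y0 M y) <= M.
Proof. intro HM. unfold truncate. destruct (Rle_dec _ _); [assumption | now rewrite dist_xx]. Qed.

Lemma pointwise_limit_truncate y0 (fs : nat -> X -> Y) f :
  pointwise_limit dY fs f -> pointwise_limit dY (fun n x => truncate y0 (INR n) (fs n x)) f.
Proof.
  intros Hlim x eps Heps. destruct (Hlim x (Rmin eps 1)) as [N1 H1]; [apply Rmin_glb_lt; lra|].
  destruct (INR_unbounded (dY y0 (f x) + 1)) as [N2 H2].
  exists (max N1 N2). intros n Hn. specialize (H1 n ltac:(lia)).
  pose proof (Rmin_l eps 1). pose proof (Rmin_r eps 1).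
  unfold truncate. destruct (Rle_dec _ _) as [_|Hfar]; [lra|exfalso; apply Hfar].
  pose proof (dist_triangle _ dY hY y0 (f x) (fs n x)).
  rewrite (dist_sym _ dY hY (f x)) in *. pose proof (le_INR N2 n ltac:(lia)). lra.
Qed.

Lemma is_closed_inner_preimage g (U : Y -> Prop) r :
  unif_continuous dX dY g -> is_closed dX (fun x => forall z, dY (g x) z < r -> U z).
Proof.
  intros Hg x Hx. apply not_all_ex_not in Hx as [z Hz].
  apply imply_to_and in Hz as [Hxz HUz].
  destruct (Hg (r - dY (g x) z)) as [de [Hde Hde']]; [lra|].
  exists de. split; [exact Hde|]. intros x' Hx' HU. apply HUz, HU.
  pose proof (Hde' x x' Hx'). pose proof (dist_triangle_sym _ dY hY (g x') (g x) z). lra.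
Qed.

Lemma unif_continuous_limit_baire_class1 fs f :
  (forall n, unif_continuous dX dY (fs n)) -> pointwise_limit dY fs f ->
  baire_class1 dX dY f.
Proof.
  intros Huc Hlim U HU.
  set (F := fun k N x => forall n, (N <= n)%nat -> forall z, dY (fs n x) z < rad k -> U z).
  exists (fun m => F (fst (Cantor.of_nat m)) (snd (Cantor.of_nat m))). split.
  { intro m. apply is_closed_forall. intro n. apply is_closed_inner_preimage, Huc. }
  intro x. split.
  - intro Hfx. destruct (HU _ Hfx) as [r [Hr Hball]].
    destruct (rad_eventually_lt (r / 2)) as [k Hk]; [lra|].
    destruct (Hlim x (rad k) (rad_gt0 k)) as [N HN].
    exists (Cantor.to_nat (k, N)). rewrite Cantor.cancel_of_to; cbn.
    intros n Hn z Hz. apply Hball. unfold ball.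
    pose proof (HN n Hn). pose proof (Hk k (le_n k)).
    pose proof (dist_triangle_sym _ dY hY (f x) (fs n x) z). lra.
  - intros [m Hm]. destruct (Hlim x (rad (fst (Cantor.of_nat m))) (rad_gt0 _)) as [N HN].
    apply (Hm (max (snd (Cantor.of_nat m)) N)); [lia|]. apply HN. lia.
Qed.

End Maps.

Lemma separable_dense_seq (Y : Type) (dY : Y -> Y -> R) (y0 : Y) :
  separable dY -> exists e : nat -> Y, forall y eps, 0 < eps -> exists k, dY y (e k) < eps.
Proof.
  intros [D [[h Hh] Hdense]].
  exists (fun k => epsilon (inhabits y0) (fun y => D y /\ h y = k)).
  intros y eps Heps. destruct (Hdense y eps Heps) as [z [Dz Hz]]. exists (h z).
  assert (Hspec : D (epsilon (inhabits y0) (fun y => D y /\ h y = h z))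
                  /\ h (epsilon (inhabits y0) (fun y => D y /\ h y = h z)) = h z).
  { apply epsilon_spec. now exists z. }
  destruct Hspec as [Dw Hw]. now rewrite (Hh _ _ Dw Dz Hw).
Qed.

Lemma baire_class1_closed_cover (X Y : Type) (dX : X -> X -> R) (dY : Y -> Y -> R)
  (hY : is_metric dY) (e : nat -> Y) (f : X -> Y) :
  (forall y eps, 0 < eps -> exists k, dY y (e k) < eps) -> baire_class1 dX dY f ->
  exists (C : nat -> nat -> X -> Prop) (c : nat -> Y),
    (forall i p, is_closed dX (C i p)) /\ (forall i x, exists p, C i p x) /\
    (forall i p x, C i p x -> dY (c p) (f x) < rad i).
Proof.
  intros He Hf.
  destruct (choice (fun (ik : nat * nat) (F : nat -> X -> Prop) =>
    (forall m, is_closed dX (F m)) /\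
    forall x, ball dY (e (snd ik)) (rad (fst ik)) (f x) <-> exists m, F m x))
    as [F HF].
  { intros [i k]. apply Hf, ball_open, hY. }
  exists (fun i p => F (i, fst (Cantor.of_nat p)) (snd (Cantor.of_nat p))),
    (fun p => e (fst (Cantor.of_nat p))).
  split; [|split].
  - intros i p. apply HF.
  - intros i x. destruct (He (f x) (rad i) (rad_gt0 i)) as [k Hk].
    destruct (proj1 (proj2 (HF (i, k)) x)) as [m Hm].
    { unfold ball. now rewrite (dist_sym _ dY hY). }
    exists (Cantor.to_nat (k, m)). now rewrite Cantor.cancel_of_to.
  - intros i p x Hx. apply (proj2 (proj2 (HF (i, _)) x)). eexists. exact Hx.
Qed.

Section Approximation.
Variables (X Y : Type) (dX : X -> X -> R) (dY : Y -> Y -> R).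
Variables (hX : is_metric dX) (hY : is_metric dY) (uX : is_ultrametric dX) (f : X -> Y).
Variables (C : nat -> nat -> X -> Prop) (c : nat -> Y).
Hypothesis C_closed : forall i p, is_closed dX (C i p).
Hypothesis C_cover : forall i x, exists p, C i p x.
Hypothesis C_close : forall i p x, C i p x -> dY (c p) (f x) < rad i.

Definition ball_meets (x : X) (n i p : nat) : Prop := exists z, dX x z < rad n /\ C i p z.

Definition choice_at (x : X) (n i : nat) : nat := least (ball_meets x n i).

Definition consistent (x : X) (n i : nat) : Prop := forall j, (j <= i)%nat ->
  dY (c (choice_at x n i)) (c (choice_at x n j)) < rad i + rad j.

(* The largest level [i <= n] such that all levels up to [i] are consistent. *)
Definition depth (x : X) (n : nat) : nat := least (fun i => (n <= i)%nat \/ ~ consistent x n (S i)).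

Definition approx (n : nat) (x : X) : Y :=
  truncate Y dY (c 0%nat) (INR n) (c (choice_at x n (depth x n))).

Lemma choice_at_spec x n i : is_least (ball_meets x n i) (choice_at x n i).
Proof.
  apply least_spec. destruct (C_cover i x) as [p Hp].
  exists p, x. rewrite dist_xx by assumption. split; [apply rad_gt0 | exact Hp].
Qed.

Lemma depth_spec x n : is_least (fun i => (n <= i)%nat \/ ~ consistent x n (S i)) (depth x n).
Proof. apply least_spec. exists n. left. lia. Qed.

Lemma consistent_depth x n : consistent x n (depth x n).
Proof.
  destruct (depth_spec x n) as [_ Hmin].
  destruct (depth x n) as [|k] eqn:Hk.
  - intros j Hj. replace j with 0%nat by lia. rewrite dist_xx by assumption.
    pose proof (rad_gt0 0). lra.
  - apply NNPP. intro Hk'. specialize (Hmin k (or_intror Hk')). lia.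
Qed.

Lemma depth_ge x n j :
  (j <= n)%nat -> (forall k, (k <= j)%nat -> consistent x n k) -> (j <= depth x n)%nat.
Proof.
  intros Hjn Hcons. destruct (depth_spec x n) as [Hd _].
  apply Nat.nlt_ge. intro Hlt. destruct Hd as [Hd|Hd]; [lia|].
  apply Hd, Hcons. lia.
Qed.

Lemma approx_locally_constant n x x' : dX x x' < rad n -> approx n x = approx n x'.
Proof.
  intro Hxx'.
  assert (E : ball_meets x n = ball_meets x' n).
  { do 2 (apply functional_extensionality; intro). apply propositional_extensionality.
    unfold ball_meets. split; intros [z [Hz HCz]]; exists z; split; try exact HCz;
      apply (ultrametric_ball_eq _ dX hX uX x x' (rad n) Hxx'); exact Hz. }
  unfold approx, depth, consistent, choice_at. now rewrite E.
Qed.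

Lemma choice_at_eventually x i :
  exists N, forall n, (N <= n)%nat -> C i (choice_at x n i) x.
Proof.
  destruct (least_spec (fun p => C i p x) (C_cover i x)) as [Hp Hmin].
  set (p := least (fun p => C i p x)) in *.
  destruct (closed_avoid_finite _ dX (C i) x p (C_closed i)) as [r [Hr Havoid]].
  { intros q Hq HCq. specialize (Hmin q HCq). lia. }
  destruct (rad_eventually_lt r Hr) as [N HN]. exists N. intros n Hn.
  replace (choice_at x n i) with p; [exact Hp|].
  apply (is_least_unique (ball_meets x n i)); [|apply choice_at_spec]. split.
  - exists x. rewrite dist_xx by assumption. split; [apply rad_gt0 | exact Hp].
  - intros q [z [Hz HCz]]. apply Nat.nlt_ge. intro Hq.
    apply (Havoid q Hq z); [specialize (HN n Hn); lra | exact HCz].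
Qed.

Lemma approx_untruncated_limit x eps : 0 < eps ->
  exists N, forall n, (N <= n)%nat -> dY (c (choice_at x n (depth x n))) (f x) < eps.
Proof.
  intro Heps. destruct (rad_eventually_lt (eps / 3)) as [j Hj]; [lra|].
  destruct (eventually_forall_le (fun i n => C i (choice_at x n i) x)
              (choice_at_eventually x) j) as [N HN].
  exists (max N j). intros n Hn.
  assert (Hclose : forall k, (k <= j)%nat -> dY (c (choice_at x n k)) (f x) < rad k).
  { intros k Hk. apply C_close, HN; lia. }
  assert (Hjd : (j <= depth x n)%nat).
  { apply depth_ge; [lia|]. intros k Hk k' Hk'.
    pose proof (Hclose k Hk). pose proof (Hclose k' ltac:(lia)).
    pose proof (dist_triangle _ dY hY (c (choice_at x n k)) (f x) (c (choice_at x n k'))).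
    rewrite (dist_sym _ dY hY (f x) (c (choice_at x n k'))) in *. lra. }
  pose proof (consistent_depth x n j Hjd). pose proof (rad_le j _ Hjd).
  pose proof (Hclose j (le_n j)). pose proof (Hj j (le_n j)).
  pose proof (dist_triangle _ dY hY (c (choice_at x n (depth x n))) (c (choice_at x n j)) (f x)).
  lra.
Qed.

Lemma approx_omega_full n : omega_full dX (approx n).
Proof.
  apply (omega_full_of_locally_constant X Y dX c _ (rad n) (rad_gt0 n)).
  - intro x. unfold approx, truncate. destruct (Rle_dec _ _); eexists; reflexivity.
  - exact (approx_locally_constant n).
Qed.

Lemma approx_lipschitz n : lipschitz dX dY (approx n).
Proof.
  apply (lipschitz_of_locally_constant X Y dX dY hX hY (c 0%nat) _ (rad n) (INR n)).
  - apply rad_gt0.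
  - apply pos_INR.
  - intro x. apply truncate_bound; [assumption | apply pos_INR].
  - exact (approx_locally_constant n).
Qed.

Lemma approx_limit : pointwise_limit dY approx f.
Proof.
  apply (pointwise_limit_truncate X Y dY hY (c 0%nat)
           (fun n x => c (choice_at x n (depth x n)))).
  exact approx_untruncated_limit.
Qed.

End Approximation.

Lemma baire_class1_approx (X Y : Type) (dX : X -> X -> R) (dY : Y -> Y -> R)
  (hX : is_metric dX) (hY : is_metric dY) (uX : is_ultrametric dX)
  (sY : separable dY) (f : X -> Y) :
  baire_class1 dX dY f ->
  exists fs : nat -> X -> Y, (forall n, omega_full dX (fs n)) /\
    (forall n, lipschitz dX dY (fs n)) /\ pointwise_limit dY fs f.
Proof.
  intro Hf. destruct (classic (inhabited Y)) as [[y0]|HY].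
  - destruct (separable_dense_seq Y dY y0 sY) as [e He].
    destruct (baire_class1_closed_cover X Y dX dY hY e f He Hf)
      as [C [c [HC [Hcover Hclose]]]].
    exists (approx X Y dX dY C c). split; [|split].
    + apply approx_omega_full; assumption.
    + apply approx_lipschitz; assumption.
    + eapply approx_limit; eassumption.
  - (* X is empty, so every condition holds vacuously. *)
    assert (HX : forall x : X, False) by (intro x; exact (HY (inhabits (f x)))).
    exists (fun _ => f). split; [|split].
    + intro n. split.
      * exists (fun _ => 0%nat). intros a b [x _]. destruct (HX x).
      * exists 1. split; [lra|]. intros y x. destruct (HX x).
    + intro n. exists 1. split; [lra|]. intro x. destruct (HX x).
    + intro x. destruct (HX x).
Qed.

Theorem mainTheorem2 (X Y : Type) (dX : X -> X -> R) (dY : Y -> Y -> R)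
  (hX : is_metric dX) (hY : is_metric dY) (uX : is_ultrametric dX)
  (sX : separable dX) (sY : separable dY) (f : X -> Y) :
  (baire_class1 dX dY f <->
     exists fs : nat -> X -> Y, (forall n, omega_full dX (fs n)) /\ pointwise_limit dY fs f) /\
  (baire_class1 dX dY f <->
     exists fs : nat -> X -> Y, (forall n, lipschitz dX dY (fs n)) /\ pointwise_limit dY fs f) /\
  (baire_class1 dX dY f <->
     exists fs : nat -> X -> Y, (forall n, unif_continuous dX dY (fs n)) /\ pointwise_limit dY fs f).
Proof.
  pose proof (baire_class1_approx X Y dX dY hX hY uX sY f) as Happrox.
  pose proof (unif_continuous_limit_baire_class1 X Y dX dY hY) as Hlimit.
  split; [|split]; split.
  - intro Hf. destruct (Happrox Hf) as [fs [Hom [_ Hlim]]]. now exists fs.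
  - intros [fs [Hom Hlim]]. apply (Hlimit fs); [|exact Hlim].
    intro n. now apply omega_full_unif_continuous.
  - intro Hf. destruct (Happrox Hf) as [fs [_ [Hlip Hlim]]]. now exists fs.
  - intros [fs [Hlip Hlim]]. apply (Hlimit fs); [|exact Hlim].
    intro n. now apply lipschitz_unif_continuous.
  - intro Hf. destruct (Happrox Hf) as [fs [_ [Hlip Hlim]]].
    exists fs. split; [|exact Hlim]. intro n. now apply lipschitz_unif_continuous.
  - intros [fs [Huc Hlim]]. exact (Hlimit fs f Huc Hlim).
Qed.
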